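(* Let ${\bf i}=(i_n)_{n\ge1}\in\{0,1\}^{\mathbb{N}}$ and define $g_{\bf i}(x)=(1-x)\sum_{n=1}^\infty i_nx^{n-1}$ for $x\in(0,1)$. Then for every integer $k\ge2$ and every $x\in[1-\frac1k,1-\frac1{k+1})$, $|g_{\bf i}'(x)|\le kx^{k-1}$. *)

From Stdlib Require Import Reals Lra.
From Coquelicot Require Import Coquelicot.
Open Scope R_scope.

(* A 0-1 sequence i = (i_n)_{n>=1} is represented by i : nat -> bool;
   only the values i n for n >= 1 are used (i 0 is ignored). *)

Definition g (i : nat -> bool) (x : R) : R :=
  (1 - x) * Series (fun m : nat => if i (S m) then x ^ m else 0).

From Stdlib Require Import Reals Lra Lia.
From Coquelicot Require Import Coquelicot.
Open Scope R_scope.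

(* Write g_i(x) = sum_m i_{m+1} (x^m - x^(m+1)).  Differentiating
   termwise (legitimate inside the unit disc, as the coefficients are bounded),
   g_i'(x) = sum_m i_{m+1} c_m(x) with c_m(x) = m x^(m-1) - (m+1) x^m.
   The c_m telescope: c_0 + ... + c_N = -(N+1) x^N <= 0, and for
   x in [1-1/k, 1-1/(k+1)) they change sign exactly once: c_m <= 0 for m < k
   and c_m >= 0 for m >= k.
   A purely combinatorial lemma then bounds every sub-sum of such a sequence:
   if c changes sign once at k and all its partial sums are nonpositive, then
   any selection of c_0, ..., c_N sums to a value of absolute value at most
   -(c_0 + ... + c_(k-1)), here k x^(k-1).  Passing to the limit gives the
   bound on g_i'(x).
   The file proves the sub-sum lemma for an abstract sequence, then the
   telescoping and sign facts for c_m(x), then termwise differentiation of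
   g_i, and finally the theorem. *)

Section SignChange.

Variables (c : nat -> R) (k : nat).
Hypothesis k_pos : (1 <= k)%nat.
Hypothesis c_nonpos : forall m, (m < k)%nat -> c m <= 0.
Hypothesis c_nonneg : forall m, (k <= m)%nat -> 0 <= c m.

Definition head_terms (m : nat) : R := if (m <? k)%nat then c m else 0.

Lemma selected_term_between (b : bool) (m : nat) :
  head_terms m <= (if b then c m else 0) <= c m - head_terms m.
Proof.
  unfold head_terms.
  destruct (Nat.ltb_spec m k) as [Hm | Hm]; destruct b.
  all: first [ specialize (c_nonpos m Hm) | specialize (c_nonneg m Hm) ]; lra.
Qed.

Lemma head_sum_antitone (N d : nat) :
  sum_f_R0 head_terms (N + d) <= sum_f_R0 head_terms N.
Proof.
  induction d as [|d IH].
  - rewrite Nat.add_0_r; lra.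
  - rewrite Nat.add_succ_r; simpl sum_f_R0.
    assert (head_terms (S (N + d)) <= 0).
    { unfold head_terms. destruct (Nat.ltb_spec (S (N + d)) k); [now apply c_nonpos | lra]. }
    lra.
Qed.

Lemma head_sum_stationary (d : nat) :
  sum_f_R0 head_terms (k - 1 + d) = sum_f_R0 c (k - 1).
Proof.
  induction d as [|d IH].
  - rewrite Nat.add_0_r. apply sum_eq. intros j Hj.
    unfold head_terms. destruct (Nat.ltb_spec j k); [reflexivity | lia].
  - rewrite Nat.add_succ_r; simpl sum_f_R0. rewrite IH.
    unfold head_terms. destruct (Nat.ltb_spec (S (k - 1 + d)) k); [lia | ring].
Qed.

Lemma head_sum_ge (N : nat) : sum_f_R0 c (k - 1) <= sum_f_R0 head_terms N.
Proof.
  rewrite <- (head_sum_stationary N), Nat.add_comm. apply head_sum_antitone.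
Qed.

Hypothesis partial_sums_nonpos : forall N, sum_f_R0 c N <= 0.

Lemma selected_sum_bound (b : nat -> bool) (N : nat) :
  Rabs (sum_f_R0 (fun m => if b m then c m else 0) N) <= - sum_f_R0 c (k - 1).
Proof.
  assert (lower : sum_f_R0 head_terms N
                  <= sum_f_R0 (fun m => if b m then c m else 0) N).
  { apply sum_Rle. intros m _. apply selected_term_between. }
  assert (upper : sum_f_R0 (fun m => if b m then c m else 0) N
                  <= sum_f_R0 c N - sum_f_R0 head_terms N).
  { rewrite <- minus_sum. apply sum_Rle. intros m _. apply selected_term_between. }
  pose proof (head_sum_ge N). pose proof (partial_sums_nonpos N).
  apply Rabs_le. lra.
Qed.

End SignChange.

(* c_m(x), the derivative of x^m - x^(m+1). *)
Definition deriv_coef (x : R) (m : nat) : R := INR m * x ^ (m - 1) - INR (S m) * x ^ m.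

(* The coefficients telescope. *)
Lemma deriv_coef_partial_sum (x : R) (N : nat) :
  sum_f_R0 (deriv_coef x) N = - INR (S N) * x ^ N.
Proof.
  induction N as [|N IH].
  - unfold deriv_coef; simpl; ring.
  - simpl sum_f_R0. rewrite IH. unfold deriv_coef.
    replace (S N - 1)%nat with N by lia. rewrite !S_INR. simpl. ring.
Qed.

(* For m >= 1, c_m(x) = x^(m-1) ((m+1)(1-x) - 1), which fixes its sign. *)
Lemma deriv_coef_factor (x : R) (m : nat) :
  deriv_coef x (S m) = x ^ m * (INR (S (S m)) * (1 - x) - 1).
Proof.
  unfold deriv_coef. replace (S m - 1)%nat with m by lia. rewrite !S_INR. simpl. ring.
Qed.

Lemma deriv_coef_nonpos (x : R) (m : nat) :
  0 <= x -> INR (S m) * (1 - x) <= 1 -> deriv_coef x m <= 0.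
Proof.
  intros Hx Hm. destruct m as [|m].
  - unfold deriv_coef; simpl; lra.
  - rewrite deriv_coef_factor. apply Rmult_le_0_l; [apply pow_le | ]; lra.
Qed.

Lemma deriv_coef_nonneg (x : R) (m : nat) :
  0 < x -> 1 <= INR (S m) * (1 - x) -> 0 <= deriv_coef x m.
Proof.
  intros Hx Hm. destruct m as [|m].
  - simpl in Hm. lra.
  - rewrite deriv_coef_factor. apply Rmult_le_pos; [apply pow_le | ]; lra.
Qed.

Lemma CV_radius_ge_1 (a : nat -> R) :
  (forall n, Rabs (a n) <= 1) -> Rbar_le 1 (CV_radius a).
Proof.
  intros Ha. apply (proj1 (CV_radius_bounded a)). exists 1. intros n.
  rewrite pow1, Rmult_1_r. apply Ha.
Qed.

Lemma g_derivative_series (i : nat -> bool) (x : R) : 0 < x < 1 ->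
  exists D, is_derive (g i) x D /\
    is_series (fun m => if i (S m) then deriv_coef x m else 0) D.
Proof.
  intros Hx.
  set (a := fun m => if i (S m) then 1 else 0).
  assert (Hrad : Rbar_lt (Rabs x) (CV_radius a)).
  { eapply Rbar_lt_le_trans; [| apply CV_radius_ge_1].
    - simpl. rewrite Rabs_pos_eq; lra.
    - intros n; unfold a; destruct (i (S n)); rewrite ?Rabs_R1, ?Rabs_R0; lra. }
  assert (Hrad' : Rbar_lt (Rabs x) (CV_radius (PS_derive a)))
    by (rewrite CV_radius_derive; exact Hrad).
  assert (g_eq : forall y, (1 - y) * PSeries a y = g i y).
  { intros y. unfold g, PSeries. f_equal. apply Series_ext. intros m.
    unfold a. destruct (i (S m)); ring. }
  set (P := PSeries a x). set (P' := PSeries (PS_derive a) x).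
  exists (-1 * P + (1 - x) * P'). split.
  - apply (is_derive_ext _ _ _ _ g_eq).
    apply (is_derive_mult (fun y => 1 - y) (PSeries a) x (-1) P').
    + auto_derive; auto; ring.
    + apply is_derive_PSeries; exact Hrad.
    + intros; unfold mult; simpl; ring.
  - assert (HP := PSeries_correct a x (CV_radius_inside a x Hrad)).
    assert (HP' := PSeries_correct _ x (CV_radius_inside _ x Hrad')).
    fold P in HP. fold P' in HP'.
    (* The derived series, reindexed so that term m is m a_m x^(m-1). *)
    set (t := fun m => INR m * a m * x ^ (m - 1)).
    assert (Ht : is_series t P').
    { apply (is_series_decr_1 t P').
      match goal with |- is_series _ ?l => replace l with P' end.
      2: { unfold t, plus, opp; simpl. ring. }
      eapply is_series_ext; [| exact HP']. intros n. cbv beta. rewrite pow_n_pow.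
      unfold t, PS_derive, scal; simpl. unfold mult; simpl.
      rewrite Nat.sub_0_r. ring. }
    eapply is_series_ext;
      [| exact (is_series_plus _ _ _ _ (is_series_scal (-1) _ _ HP)
                                       (is_series_scal (1 - x) _ _ Ht))].
    intros n. cbv beta. rewrite pow_n_pow.
    unfold plus, scal, t, deriv_coef, a; simpl. unfold mult; simpl.
    destruct (i (S n)); [destruct n; simpl; rewrite ?Nat.sub_0_r; ring | ring].
Qed.

Lemma series_abs_le (a : nat -> R) (l C : R) :
  is_series a l -> (forall N, Rabs (sum_n a N) <= C) -> Rabs l <= C.
Proof.
  intros Hl Hb. apply Rabs_le.
  assert (Hb' : forall N, - C <= sum_n a N <= C) by (intros N; apply Rabs_le_between, Hb).
  split.
  - apply (is_lim_seq_le (fun _ => - C) (sum_n a) (- C) l);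
      [intros N; apply Hb' | apply is_lim_seq_const | exact Hl].
  - apply (is_lim_seq_le (sum_n a) (fun _ => C) l C);
      [intros N; apply Hb' | exact Hl | apply is_lim_seq_const].
Qed.

Lemma interval_conditions (k : nat) (x : R) :
  (2 <= k)%nat -> 1 - 1 / INR k <= x -> x < 1 - 1 / INR (k + 1) ->
  0 < x < 1 /\ INR k * (1 - x) <= 1 /\ 1 < INR (S k) * (1 - x).
Proof.
  intros Hk Hlo Hhi.
  assert (Kge2 : 2 <= INR k) by (apply (le_INR 2); exact Hk).
  rewrite <- Nat.add_1_r, plus_INR in *. simpl in *.
  assert (Hlo' : INR k * (1 - x) <= 1).
  { replace 1 with (INR k * (1 / INR k)) at 2 by (field; lra).
    apply Rmult_le_compat_l; lra. }
  assert (Hhi' : 1 < (INR k + 1) * (1 - x)).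
  { replace 1 with ((INR k + 1) * (1 / (INR k + 1))) at 1 by (field; lra).
    apply Rmult_lt_compat_l; lra. }
  repeat split; nra.
Qed.

Theorem lemma5p3 (i : nat -> bool) (k : nat) (x : R) :
  (2 <= k)%nat ->
  1 - 1 / INR k <= x -> x < 1 - 1 / INR (k + 1) ->
  ex_derive (g i) x /\ Rabs (Derive (g i) x) <= INR k * x ^ (k - 1).
Proof.
  intros Hk Hlo Hhi.
  destruct (interval_conditions k x Hk Hlo Hhi) as (Hx & Hk_lo & Hk_hi).
  destruct (g_derivative_series i x Hx) as (D & HD & HS).
  split; [exists D; exact HD |].
  rewrite (is_derive_unique _ _ _ HD).
  apply (series_abs_le _ _ _ HS). intros N. rewrite sum_n_Reals.
  replace (INR k * x ^ (k - 1)) with (- sum_f_R0 (deriv_coef x) (k - 1))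
    by (rewrite deriv_coef_partial_sum; replace (S (k - 1)) with k by lia; ring).
  apply (selected_sum_bound (deriv_coef x) k).
  - lia.
  - intros m Hm. apply deriv_coef_nonpos; [lra |].
    assert (INR (S m) <= INR k) by (apply le_INR; lia).
    nra.
  - intros m Hm. apply deriv_coef_nonneg; [lra |].
    assert (INR (S k) <= INR (S m)) by (apply le_INR; lia).
    nra.
  - intros M. rewrite deriv_coef_partial_sum.
    assert (0 <= INR (S M) * x ^ M) by (apply Rmult_le_pos; [apply pos_INR | apply pow_le; lra]).
    lra.
Qed.
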